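(* Let $G=(V,E)$ be a network and consider a rate-$\omega$ LNEC code over a finite field $\mathbb{F}$ on $G$, as described in the context. Let $t$ be a sink node with $C_t\ge\omega$ and let $r$ be a nonnegative integer with $r\le C_t-\omega$. Then $$\Phi(t)\cap\Delta(t,\xi)=\{0\}\quad\text{for all }\xi\in\mathcal{E}_t(r)$$ if and only if $$\Phi(t)\cap\Delta(t,\xi)=\{0\}\quad\text{for all }\xi\in\mathcal{A}_t(r).$$
   Context: Network: $G=(V,E)$ is a finite directed acyclic graph (parallel edges allowed) with a single source node $s$ and a set of sink nodes $T\subseteq V\setminus\{s\}$; $s$ has no incoming edges and sink nodes have no outgoing edges. For an edge $e$, $\mathrm{tail}(e)$, $\mathrm{head}(e)$ are its tail and head; $\mathrm{In}(v)$, $\mathrm{Out}(v)$ are the incoming/outgoing edge sets of node $v$. A directed path is a sequence of edges $(e_1,\dots,e_m)$, $m\ge1$, with $\mathrm{tail}(e_{k+1})=\mathrm{head}(e_k)$. A cut separating node $v$ from node $u$ is a set of edges whose removal leaves no directed path from $u$ to $v$; $C_t$ is the minimum size of a cut separating sink $t$ from $s$. LNEC code: with rate $\omega\ge1$ and finite field $\mathbb{F}$, introduce imaginary source edges $d_1',\dots,d_\omega'$ ending at $s$ with $\mathrm{In}(s)=\{d_1',\dots,d_\omega'\}$, and for each $e\in E$ an imaginary error edge $e'$ with head $\mathrm{tail}(e)$; $E'=\{e':e\in E\}$ (for non-source nodes, $\mathrm{In}(v)$ contains only edges of $E$). The code is given by local encoding coefficients $k_{d,e}\in\mathbb{F}$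 for $e\in E$, $d\in\mathrm{In}(\mathrm{tail}(e))$. Extended global encoding kernels are vectors in $\mathbb{F}^{\omega+|E|}$ indexed by $\{d_i'\}\cup E'$: $\tilde f_{d_i'}=1_{d_i'}$, $\tilde f_{e'}=1_{e'}$ (standard basis vectors), and recursively in topological order $\tilde f_e=\sum_{d\in\mathrm{In}(\mathrm{tail}(e))}k_{d,e}\tilde f_d+1_{e'}$. For sink $t$, $\mathrm{row}_t(d')=(\tilde f_{\hat e}(d'):\hat e\in\mathrm{In}(t))$. Message space $\Phi(t)=\langle\mathrm{row}_t(d_i'):1\le i\le\omega\rangle$; error space of $\xi\subseteq E$: $\Delta(t,\xi)=\langle\mathrm{row}_t(e'):e\in\xi\rangle$ (spans in $\mathbb{F}^{|\mathrm{In}(t)|}$). Graph notions: for $\xi\subseteq E$ and a node $u$, $A\subseteq E$ is a cut separating $u$ from $\xi$ if every directed path in $G$ whose first edge lies in $\xi$ and whose last edge has head $u$ contains an edge of $A$ (equivalently, $A$ separates $\xi$ from $u$ in the reversed network). $\mathrm{mincut}(\xi,u)$ is the minimum size of such a cut; a cut of that size is a minimum cut separating $u$ from $\xi$. A minimum cut separating $u$ from $\xi$ is primary if it separates $u$ from every minimum cut separating $u$ from $\xi$; it exists and is unique. $\xi$ is primary for $u$ if $\xi$ is the primary minimum cut separating $u$ from $\xi$. For a sink $t$ and integer $r\ge0$: $\mathcal{E}_t(r)=\{\xi\subseteq E:\mathrm{mincut}(\xi,t)\le r\}$ and $\mathcal{A}_t(r)=\{\xi\subseteq E:|\xi|=r,\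 \xi\text{ primary for }t\}$. *)

From mathcomp Require Import all_boot all_algebra.
Set Implicit Arguments. Unset Strict Implicit. Unset Printing Implicit Defensive.
Import GRing.Theory.
Local Open Scope ring_scope.

Section Network.
Variables (V E : finType) (tail head : E -> V).

Definition is_dpath (p : seq E) : bool :=
  if p is e :: p' then path (fun d e' => head d == tail e') e p' else false.

Definition acyclic : Prop :=
  forall e p, is_dpath (e :: p) -> tail e != head (last e p).

Definition st_cut (s t : V) (A : {set E}) : Prop :=
  forall e p, is_dpath (e :: p) -> tail e = s -> head (last e p) = t ->
    has (fun d => d \in A) (e :: p).

Definition Ct_ge (s t : V) (k : nat) : Prop :=
  forall A, st_cut s t A -> (k <= #|A|)%N.

Definition cut_from (xi : {set E}) (u : V) (A : {set E}) : Prop :=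
  forall e p, is_dpath (e :: p) -> e \in xi -> head (last e p) = u ->
    has (fun d => d \in A) (e :: p).

Definition mincut_le (xi : {set E}) (u : V) (r : nat) : Prop :=
  exists A, cut_from xi u A /\ (#|A| <= r)%N.

Definition min_cut_from (xi : {set E}) (u : V) (A : {set E}) : Prop :=
  cut_from xi u A /\ forall B, cut_from xi u B -> (#|A| <= #|B|)%N.

Definition primary_cut (xi : {set E}) (u : V) (A : {set E}) : Prop :=
  min_cut_from xi u A /\ forall B, min_cut_from xi u B -> cut_from B u A.

Definition primary_for (xi : {set E}) (u : V) : Prop := primary_cut xi u xi.

Definition in_Ecal (t : V) (r : nat) (xi : {set E}) : Prop := mincut_le xi t r.
Definition in_Acal (t : V) (r : nat) (xi : {set E}) : Prop :=
  #|xi| = r /\ primary_for xi t.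

Definition In_edges (v : V) : {set E} := [set e | head e == v].

(* LNEC code data: field F, rate w, source s.
   Coordinates of extended kernels are indexed by Idx = {d_i'} + E',
   encoded as the sum type 'I_w + E (inl i = d_i', inr e = e'). *)
Variables (F : fieldType) (w : nat) (s : V).
Definition Idx := ('I_w + E)%type.

(* f is the family of extended global encoding kernels of the code with
   local encoding coefficients ksrc i e = k_{d_i',e} (relevant when tail e = s)
   and kE d e = k_{d,e} (relevant when head d = tail e):
   f_e = sum_{d in In(tail e)} k_{d,e} f_d + 1_{e'}, where In(s) = {d_i'}
   (with f_{d_i'} = 1_{d_i'}) and In(v) for other v consists of real edges. *)
Definition is_ext_kernels (ksrc : 'I_w -> E -> F) (kE : E -> E -> F)
    (f : E -> Idx -> F) : Prop :=
  forall e (x : Idx),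
    f e x = (if tail e == s then \sum_(i < w) ksrc i e * (x == inl i)%:R else 0)
            + \sum_(d | head d == tail e) kE d e * f d x
            + (x == inr e)%:R.

(* Matrix whose rows are row_t(d_i'), i < w; columns indexed by In(t)
   (enumerated). Its row space is Phi(t). *)
Definition Phi_mx (f : E -> Idx -> F) (t : V) : 'M[F]_(w, #|In_edges t|) :=
  \matrix_(i < w, j < #|In_edges t|) f (enum_val j) (inl i).

(* Matrix whose rows are row_t(e'), e in xi. Its row space is Delta(t,xi). *)
Definition Delta_mx (f : E -> Idx -> F) (t : V) (xi : {set E})
    : 'M[F]_(#|xi|, #|In_edges t|) :=
  \matrix_(i < #|xi|, j < #|In_edges t|) f (enum_val j) (inr (enum_val i)).

End Network.

From mathcomp Require Import all_boot all_algebra.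
From mathcomp Require Import boolp zify.
Set Implicit Arguments. Unset Strict Implicit. Unset Printing Implicit Defensive.
Import GRing.Theory.
Local Open Scope ring_scope.

(* A primary set of size r is a cut separating t from itself, so it lies in
   E_t(r).  Conversely, let mincut(xi, t) <= r.  Call an edge blocked by C when
   every path from it to t meets C; blocking is a closure operator and C cuts
   xi off t iff C blocks xi.  Among the r-edge sets blocking xi pick one, C,
   blocking as many edges as possible: then any B with |B| <= r blocking C
   blocks exactly what C blocks.  As C_t >= r + w > r, some incoming edge a of
   t lies outside C, and a cut B of C with |B| < r would make a |: B such a
   set, blocking a and hence forcing a in C.  So C is the primary minimum cut
   separating t from itself.  Running the kernel recursion backwards from the
   error edge writes the error row of a blocked edge as a combination of those
   of C, whence Delta(t, xi) <= Delta(t, C). *)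

Lemma exists_card_superset (T : finType) (A : {set T}) n :
  (#|A| <= n <= #|T|)%N -> exists2 B : {set T}, A \subset B & #|B| = n.
Proof.
move=> /andP[]; move: {2}(n - #|A|)%N (erefl (n - #|A|)%N) => k.
elim: k A => [|k IHk] A kn An nT; first by exists A => //; lia.
have /set0Pn[x]: ~: A != set0 by rewrite -card_gt0; have := cardsC A; lia.
rewrite inE => xA.
have xAn : #|x |: A| = #|A|.+1 by rewrite cardsU1 xA.
have [|||B xAB Bn] := IHk (x |: A); [lia | lia | lia |].
by exists B => //; apply: subset_trans xAB; apply: subsetUr.
Qed.

Section Blocking.
Variables (V E : finType) (tail head : E -> V).

Definition ancestors (d : E) : {set E} :=
  [set x | `[< exists p, is_dpath tail head (x :: p) /\ last x p = d >]].

Definition blocked (t : V) (C : {set E}) : {set E} :=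
  [set e | `[< forall p, is_dpath tail head (e :: p) -> head (last e p) = t ->
                has (fun d => d \in C) (e :: p) >]].

Section Acyclic.
Hypothesis acyc : acyclic tail head.

Lemma ancestors_proper d e : head d == tail e -> ancestors d \proper ancestors e.
Proof.
move=> de; apply/properP; split.
  apply/subsetP => x; rewrite !inE => /asboolP[p [xp pd]]; apply/asboolP.
  exists (rcons p e); split; last by rewrite last_rcons.
  by rewrite /= rcons_path -/(is_dpath tail head (x :: p)) xp pd.
exists e; first by rewrite inE; apply/asboolP; exists [::].
rewrite inE; apply/asboolP => -[p [ep pd]].
by move: (acyc ep); rewrite pd eq_sym de.
Qed.

Lemma edge_ind (P : E -> Prop) :
  (forall e, (forall d, head d == tail e -> P d) -> P e) -> forall e, P e.
Proof.
move=> IH; suff: forall n e, #|ancestors e| = n -> P e by move=> + e; apply.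
elim/ltn_ind => n IHn e en; apply: IH => d de; apply: IHn _ erefl.
by rewrite -en proper_card ?ancestors_proper.
Qed.

Lemma edge_ind_rev (P : E -> Prop) :
  (forall d, (forall e, head d == tail e -> P e) -> P d) -> forall d, P d.
Proof.
move=> IH; suff: forall n d, #|~: ancestors d| = n -> P d by move=> + d; apply.
elim/ltn_ind => n IHn d dn; apply: IH => e de; apply: IHn _ erefl.
by rewrite -dn proper_card ?properC ?ancestors_proper.
Qed.

End Acyclic.

Lemma cut_fromE (xi A : {set E}) t :
  cut_from tail head xi t A <-> xi \subset blocked t A.
Proof.
split=> [xiA | /subsetP xiA e p ep exi pt].
  by apply/subsetP => e exi; rewrite inE; apply/asboolP => p ep pt; apply: xiA.
by move: (xiA e exi); rewrite inE => /asboolP; apply.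
Qed.

Lemma sub_blocked t (C : {set E}) : C \subset blocked t C.
Proof. by apply/subsetP => e eC; rewrite inE; apply/asboolP => p _ _ /=; rewrite eC. Qed.

Lemma blockedS t (B B' : {set E}) : B \subset B' -> blocked t B \subset blocked t B'.
Proof.
move=> /subsetP BB'; apply/subsetP => e; rewrite !inE => /asboolP eB.
by apply/asboolP => p ep pt; apply: sub_has (eB p ep pt) => x /BB'.
Qed.

Lemma blocked_closed t (C B : {set E}) :
  C \subset blocked t B -> blocked t C \subset blocked t B.
Proof.
move=> /cut_fromE CB; apply/subsetP => e; rewrite !inE => /asboolP eC.
apply/asboolP => p ep pt; have /hasP[c cp cC] := eC p ep pt.
move: cp; rewrite in_cons => /predU1P[ce | /splitPr pc].
  by rewrite ce in cC; apply: CB.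
case: pc ep pt => p1 p2 ep pt.
have cp2 : is_dpath tail head (c :: p2).
  by move: ep; rewrite /= cat_path => /and3P[].
have := CB c p2 cp2 cC; rewrite -pt last_cat => /(_ erefl).
by rewrite -cat_cons has_cat => ->; rewrite orbT.
Qed.

Lemma In_edges_blocked t (B : {set E}) a :
  a \in In_edges head t -> a \in blocked t B -> a \in B.
Proof. by rewrite !inE => /eqP ha /asboolP /(_ [::] erefl ha); rewrite /= orbF. Qed.

Lemma primary_of_maximal_blocked t r (C : {set E}) a :
  #|C| = r -> a \in In_edges head t -> a \notin C ->
  (forall B, C \subset blocked t B -> (#|B| <= r)%N ->
     blocked t B \subset blocked t C) ->
  primary_for tail head C t.
Proof.
move=> Cr aIn aC Cmax.
have Cmin B : cut_from tail head C t B -> (r <= #|B|)%N.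
  move=> /cut_fromE CB; rewrite leqNgt; apply/negP => Br.
  have CaB : C \subset blocked t (a |: B).
    exact: subset_trans CB (blockedS _ (subsetUr _ _)).
  have aBr : (#|a |: B| <= r)%N by rewrite cardsU1; case: (a \notin B); lia.
  have /subsetP aCB := Cmax _ CaB aBr.
  apply: (negP aC); apply: (In_edges_blocked aIn); apply: aCB.
  by apply: (subsetP (sub_blocked _ _)); rewrite setU11.
split; first by split=> [|B /Cmin]; [apply/cut_fromE/sub_blocked | rewrite Cr].
move=> B [/[dup] /cut_fromE CB /Cmin Br Bmin]; apply/cut_fromE.
have /eqP BC : #|B| == r by rewrite eqn_leq Br -Cr Bmin //; apply/cut_fromE/sub_blocked.
exact: subset_trans (sub_blocked t B) (Cmax B CB (eq_leq BC)).
Qed.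

Lemma exists_primary_cut (xi : {set E}) t r :
  mincut_le tail head xi t r -> (r < #|In_edges head t|)%N ->
  exists2 C, in_Acal tail head t r C & cut_from tail head xi t C.
Proof.
move=> [A [/cut_fromE xiA Ar]] rIn.
have rE : (r <= #|E|)%N := leq_trans (ltnW rIn) (max_card _).
pose P (C : {set E}) := (#|C| == r) && (xi \subset blocked t C).
have [C0 AC0 C0r] := exists_card_superset (A := A) (n := r) ltac:(lia).
have PC0 : P C0 by rewrite /P C0r eqxx (subset_trans xiA (blockedS _ AC0)).
case: (arg_maxnP (fun C => #|blocked t C|) PC0) => C /andP[/eqP Cr xiC] Cmax.
have [a aIn aC] : exists2 a, a \in In_edges head t & a \notin C.
  by apply/subsetPn; apply: contraTN rIn => /subset_leq_card; rewrite Cr -leqNgt.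
exists C; last exact/cut_fromE.
split=> //; apply: (primary_of_maximal_blocked Cr aIn aC) => B CB Br.
have [B2 BB2 B2r] := exists_card_superset (A := B) (n := r) ltac:(lia).
have CB2 := subset_trans (blocked_closed CB) (blockedS t BB2).
have /eqP CB2E : blocked t C == blocked t B2.
  by rewrite eqEcard CB2; apply: Cmax; rewrite /P B2r eqxx (subset_trans xiC CB2).
by rewrite CB2E; apply: blockedS.
Qed.

End Blocking.

Lemma sum_mul_delta (T : finType) (R : pzSemiRingType) (P : pred T) (g : T -> R) x :
  \sum_(y | P y) g y * (y == x)%:R = if P x then g x else 0.
Proof.
rewrite big_mkcond (bigD1 x) //= eqxx mulr1 big1 ?addr0 // => y /negPf yx.
by rewrite yx mulr0; case: ifP.
Qed.

Section ErrorRows.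
Variables (V E : finType) (tail head : E -> V) (F : fieldType) (w : nat) (s : V).
Variables (ksrc : 'I_w -> E -> F) (kE : E -> E -> F) (f : E -> Idx E w -> F).
Hypotheses (acyc : acyclic tail head) (f_ext : is_ext_kernels tail head s ksrc kE f).

Lemma ext_kernels_err e x :
  f e (inr x) = \sum_(d | head d == tail e) kE d e * f d (inr x) + (x == e)%:R.
Proof.
rewrite f_ext; case: (tail e == s); last by rewrite add0r.
by rewrite big1 ?add0r // => i _; rewrite mulr0.
Qed.

Lemma ext_kernels_err_rev e x :
  f x (inr e) = (x == e)%:R + \sum_(d | tail d == head e) kE e d * f x (inr d).
Proof.
elim/(edge_ind acyc): x => x IH.
rewrite ext_kernels_err.
have -> : \sum_(d' | head d' == tail x) kE d' x * f d' (inr e) =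
    \sum_(d' | head d' == tail x) kE d' x * (d' == e)%:R +
    \sum_(d' | head d' == tail x) \sum_(d | tail d == head e)
       kE d' x * (kE e d * f d' (inr d)).
  by rewrite -big_split; apply: eq_bigr => d' /IH ->; rewrite mulrDr big_distrr.
under [X in _ = _ + X]eq_bigr do rewrite ext_kernels_err mulrDr big_distrr.
rewrite big_split /= !sum_mul_delta exchange_big [tail x == _]eq_sym [e == x]eq_sym.
have -> : \sum_(d | tail d == head e) \sum_(d' | head d' == tail x)
    kE d' x * (kE e d * f d' (inr d)) =
  \sum_(d | tail d == head e) \sum_(d' | head d' == tail x)
    kE e d * (kE d' x * f d' (inr d)).
  by apply: eq_bigr => d _; apply: eq_bigr => d' _; rewrite mulrCA.
by rewrite [LHS]addrC (addrC (if _ then _ else _)).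
Qed.

Definition err_row (t : V) (e : E) : 'rV[F]_#|In_edges head t| :=
  \row_j f (enum_val j) (inr e).

Lemma row_Delta_mx t (xi : {set E}) i :
  row i (Delta_mx head f t xi) = err_row t (enum_val i).
Proof. by apply/rowP => j; rewrite !mxE. Qed.

Lemma err_row_sub_Delta t C e :
  e \in blocked tail head t C -> (err_row t e <= Delta_mx head f t C)%MS.
Proof.
elim/(edge_ind_rev acyc): e => e IH eC.
have [eC' | eNC] := boolP (e \in C).
  by rewrite -(enum_rankK_in eC' eC') -row_Delta_mx row_sub.
have -> : err_row t e = \sum_(d | tail d == head e) kE e d *: err_row t d.
  apply/rowP => j; rewrite summxE !mxE ext_kernels_err_rev.
  have /negPf -> : enum_val j != e.
    apply: contraNneq eNC => je; apply: In_edges_blocked eC.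
    by rewrite -je enum_valP.
  by rewrite add0r; apply: eq_bigr => d _; rewrite !mxE.
apply: summx_sub => d de; apply/scalemx_sub/IH; first by rewrite eq_sym.
move: eC; rewrite !inE => /asboolP eC; apply/asboolP => p dp pt.
have := eC (d :: p); rewrite /= (negPf eNC) eq_sym de; exact.
Qed.

Lemma Delta_mxS t (xi C : {set E}) :
  xi \subset blocked tail head t C ->
  (Delta_mx head f t xi <= Delta_mx head f t C)%MS.
Proof.
move=> /subsetP xiC; apply/row_subP => i; rewrite row_Delta_mx.
exact/err_row_sub_Delta/xiC/enum_valP.
Qed.

End ErrorRows.

Theorem theorem8
  (V E : finType) (tail head : E -> V) (s : V) (T : {set V})
  (F : finFieldType) (w : nat)
  (ksrc : 'I_w -> E -> F) (kE : E -> E -> F) (f : E -> Idx E w -> F)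
  (t : V) (r : nat) :
  acyclic tail head ->
  (forall e, head e != s) ->
  s \notin T ->
  (forall e, tail e \notin T) ->
  (0 < w)%N ->
  is_ext_kernels tail head s ksrc kE f ->
  t \in T ->
  Ct_ge tail head s t w ->
  Ct_ge tail head s t (r + w) ->
  (forall xi : {set E}, in_Ecal tail head t r xi ->
     (Phi_mx head f t :&: Delta_mx head f t xi)%MS = 0) <->
  (forall xi : {set E}, in_Acal tail head t r xi ->
     (Phi_mx head f t :&: Delta_mx head f t xi)%MS = 0).
Proof.
move=> acyc _ _ _ w_gt0 f_ext _ _ Ct_rw; split.
  by move=> PhiE xi [xir [[xi_cut _] _]]; apply: PhiE; exists xi; rewrite xir.
move=> PhiA xi xi_mincut.
have In_cut : st_cut tail head s t (In_edges head t).
  by move=> e p _ _ pt; apply/hasP; exists (last e p); rewrite ?mem_last // inE pt.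
have rIn : (r < #|In_edges head t|)%N by have := Ct_rw _ In_cut; lia.
have [C C_A /cut_fromE xiC] := exists_primary_cut xi_mincut rIn.
apply/eqP; rewrite -submx0 -(PhiA C C_A).
exact/capmxS/(Delta_mxS acyc f_ext).
Qed.
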